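(* For $a,b\in\mathbb{Z}$, writing $\Sigma_{(c,d)}$ for the set of finite sums $\sum f_{(a',b')}E_{(a',b')}$ over $(a',b')\preceq(c,d)$ with all $f_{(a',b')}\in q^{-\frac12}\mathbb{Z}[q^{-\frac12}]$, we have: (1) $q^{\frac12a}E_{(a,b)}X_0-E_{(a,b-1)}\in\Sigma_{(a+1,b-1)}$; (2) $q^{\frac12b}X_3E_{(a,b)}-E_{(a-1,b)}\in\Sigma_{(a-1,b+4)}$; (3) $q^{\frac12b}E_{(a,b)}X_1-E_{(a+1,b)}\in\Sigma_{(a+1,b+4)}$; (4) if $b>0$, $q^{-\frac12a}X_4E_{(a,b)}-E_{(a,b-1)}\in\Sigma_{(a-1,b-1)}$; (5) if $a>0$ and $b\le0$, $q^{-\frac12(a-b)}X_4E_{(a,b)}-E_{(a-1,b-1)}\in\Sigma_{(a-1,b+3)}$; (6) if $a\le0$ and $b\le0$, $q^{-\frac12(a-b)}X_4E_{(a,b)}-E_{(a-1,b-1)}\in\Sigma_{(a,b)}$.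
   Context: Let $\mathcal{T}$ be the quantum torus over $\mathbb{Z}[q^{\pm\frac12}]$ generated by $X_1^{\pm1},X_2^{\pm1}$ with $X_1X_2=qX_2X_1$, with skew field of fractions $\mathcal{F}$. Define $X_k\in\mathcal{F}$ ($k\in\mathbb{Z}$) by $X_{k-1}X_{k+1}=q^{\frac12}X_k+1$ for $k$ odd and $X_{k-1}X_{k+1}=q^2X_k^4+1$ for $k$ even; $\mathcal{A}_q(1,4)$ is the $\mathbb{Z}[q^{\pm\frac12}]$-subalgebra of $\mathcal{F}$ generated by all $X_k$. For $x\in\mathbb{Z}$, $[x]_+=\max(x,0)$. Standard monomials: $E_{(a,b)}=q^{-\frac12ab}X_3^{[-a]_+}X_1^{[a]_+}X_2^{[b]_+}X_0^{[-b]_+}$ for $(a,b)\in\mathbb{Z}^2$. Partial order on $\mathbb{Z}^2$: $(a',b')\preceq(a,b)$ iff $[-a']_+\le[-a]_+$ and $[-b']_+\le[-b]_+$. *)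

From HB Require Import structures.
From mathcomp Require Import all_boot all_order all_algebra.
Set Implicit Arguments. Unset Strict Implicit. Unset Printing Implicit Defensive.
Import Order.TTheory GRing.Theory Num.Theory.
Local Open Scope ring_scope.

(* The quantum torus T over Z[q^{±1/2}] is presented by generators
   v = q^{1/2} (central, invertible), X1^{±1}, X2^{±1} with X1 X2 = v^2 X2 X1.
   We work in an arbitrary unit ring A receiving such data. *)

(* [x]_+ = max(x,0), as a natural number (it is only used as an exponent). *)
Definition posp (x : int) : nat := match x with Posz n => n | Negz _ => 0%N end.

Definition preceq (p' p : int * int) : bool :=
  (posp (- p'.1) <= posp (- p.1))%N && (posp (- p'.2) <= posp (- p.2))%N.

Section QT.
Variables (A : unitRingType) (v X1 X2 : A).

(* Cluster variables solved from the exchange relations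
   X_{k-1} X_{k+1} = q^{1/2} X_k + 1 (k odd), = q^2 X_k^4 + 1 (k even). *)
Definition qX0 : A := (v * X1 + 1) * X2^-1.
Definition qX3 : A := X1^-1 * (v ^+ 4 * X2 ^+ 4 + 1).
Definition qX4 : A := X2^-1 * (v * qX3 + 1).

Definition Emon (a b : int) : A :=
  v ^ (- (a * b)) * qX3 ^+ posp (- a) * X1 ^+ posp a * X2 ^+ posp b
    * qX0 ^+ posp (- b).

Definition coefOK (f : A) : Prop :=
  exists (n : nat) (c : nat -> int),
    f = \sum_(i < n) (c i)%:~R * v ^- i.+1.

Definition Sigma (c d : int) (x : A) : Prop :=
  exists s : seq ((int * int) * A),
    (forall t, t \in s -> preceq t.1 (c, d) /\ coefOK t.2) /\
    x = \sum_(t <- s) t.2 * Emon t.1.1 t.1.2.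

End QT.

From HB Require Import structures.
From mathcomp Require Import all_boot all_order all_algebra.
From mathcomp Require Import ring zify.
Import Order.TTheory GRing.Theory Num.Theory.
Set Implicit Arguments. Unset Strict Implicit. Unset Printing Implicit Defensive.
Local Open Scope ring_scope.

(* Up to a power of v = q^(1/2),
   E_(a,b) is a word X3^k X1^n X2^j X0^m.  In each of (1)-(6) the new factor is
   moved through this word by q-commutation, and one exchange relation
   (X3 X1 = v^-4 X2^4 + 1, X2 X0 = v^-1 X1 + 1, X4 X1 = v^-3 X2^3 + v X0, or
   X4 = v^-1 X3 X0 - v^-4 X2^3) splits off the leading monomial.  The rest is a
   combination of standard monomials with negative v-exponents, some multiplied
   on the left by X2^3 or X2^4.  These stay in Sigma because left multiplication
   by X2 sends v^e E_(a',b') with (a',b') ⪯ (a,b) to a combination of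
   v^e' E_(a'',b'') with (a'',b'') ⪯ (a,b+1) and e' <= e + [-a]_+, which is
   proved by induction on [-a]_+. *)

(* Locked: with the plain power, rewriting with [mulrA] unfolds constant powers
   such as [v ^ 2] into products. *)
HB.lock Definition vpow (A : unitRingType) (v : A) (z : int) : A := v ^ z.

Section QCommutation.
Variables (A : unitRingType) (v : A).
Hypothesis v_unit : v \is a GRing.unit.
Local Notation vp := (vpow v).

Lemma vpowE (z : int) : vp z = v ^ z.
Proof. by rewrite vpow.unlock. Qed.

Lemma vpow_nat (n : nat) : vp n = v ^+ n.
Proof. by rewrite vpowE. Qed.

Lemma vpow0 : vp 0 = 1.
Proof. exact: vpow_nat. Qed.

Lemma vpow1 : vp 1 = v.
Proof. exact: vpow_nat. Qed.

Lemma vpowD (m n : int) : vp m * vp n = vp (m + n).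
Proof. by rewrite !vpowE exprzDr. Qed.

Lemma vpowDA (m n : int) (x : A) : vp m * (vp n * x) = vp (m + n) * x.
Proof. by rewrite mulrA vpowD. Qed.

Lemma vpowNK (m : int) (x : A) : vp (- m) * (vp m * x) = x.
Proof. by rewrite vpowDA addNr vpow0 mul1r. Qed.

Lemma comm_vpow (z : int) (y : A) : GRing.comm v y -> GRing.comm y (vp z).
Proof.
rewrite vpowE => /commr_sym cyv; case: z => n; first exact: commrX.
exact/commrV/commrX.
Qed.

Lemma vpow_mulCA {y : A} (z : int) (w : A) :
  GRing.comm v y -> y * (vp z * w) = vp z * (y * w).
Proof. by move=> /(comm_vpow z) cy; rewrite !mulrA cy. Qed.

Lemma qcommXr {x y : A} {c : int} : GRing.comm v x -> y * x = vp c * (x * y) ->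
  forall i : nat, y * x ^+ i = vp (c * i%:Z) * (x ^+ i * y).
Proof.
move=> cx yx; elim=> [|i IH]; first by rewrite mulr0 vpow0 expr0 mulr1 !mul1r.
rewrite exprSr mulrA IH -!mulrA yx (vpow_mulCA _ _ (commrX i cx)) vpowDA.
by rewrite [x ^+ i * (x * y)]mulrA; congr (vp _ * _); lia.
Qed.

Lemma qcommX {x y : A} {c : int} :
  GRing.comm v x -> GRing.comm v y -> y * x = vp c * (x * y) ->
  forall i j : nat, y ^+ j * x ^+ i = vp (c * (i%:Z * j%:Z)) * (x ^+ i * y ^+ j).
Proof.
move=> cx cy yx i; elim=> [|j IH]; first by rewrite !mulr0 vpow0 expr0 mulr1 !mul1r.
rewrite exprS -mulrA IH (vpow_mulCA _ _ cy) [y * (x ^+ i * _)]mulrA (qcommXr cx yx).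
by rewrite -!mulrA vpowDA; congr (vp _ * _); lia.
Qed.

Lemma qcommVr {x y : A} {c : int} : GRing.comm v x -> x \is a GRing.unit ->
  y * x = vp c * (x * y) -> y * x^-1 = vp (- c) * (x^-1 * y).
Proof.
move=> cx ux yx.
have -> : x^-1 * y = vp c * (y * x^-1).
  by rewrite -{1}(mulrK ux y) yx !mulrA (comm_vpow c (commrV cx)) -!mulrA mulKr.
by rewrite vpowNK.
Qed.

Lemma qcommVl {x y : A} {c : int} : GRing.comm v y -> y \is a GRing.unit ->
  y * x = vp c * (x * y) -> y^-1 * x = vp (- c) * (x * y^-1).
Proof.
move=> cy uy yx.
have -> : x * y^-1 = vp c * (y^-1 * x).
  by rewrite -{1}(mulKr uy x) yx -!mulrA (vpow_mulCA _ _ (commrV cy)) mulrV // mulr1.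
by rewrite vpowNK.
Qed.

End QCommutation.

Lemma posp_max (x : int) : (posp x)%:Z = Num.max x 0.
Proof. by case: x => n /=; lia. Qed.

Lemma posp_oppn (n : nat) : posp (- n%:Z) = 0%N.
Proof. by case: n. Qed.

Lemma int_nonposP (b : int) : b <= 0 -> exists m : nat, b = - m%:Z.
Proof. by case: b => [[|j]|m] // _; [exists 0%N | exists m.+1]. Qed.

Lemma preceq_refl (p : int * int) : preceq p p.
Proof. by rewrite /preceq !leqnn. Qed.

Lemma preceq_trans (p q r : int * int) : preceq p q -> preceq q r -> preceq p r.
Proof.
move=> /andP[pq1 pq2] /andP[qr1 qr2].
by apply/andP; split; [exact: leq_trans qr1 | exact: leq_trans qr2].
Qed.

Lemma preceqE (p q : int * int) : preceq p q =
  (Num.max (- p.1) 0 <= Num.max (- q.1) 0) && (Num.max (- p.2) 0 <= Num.max (- q.2) 0).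
Proof. by rewrite /preceq -!lez_nat !posp_max. Qed.

Ltac solve_preceq := rewrite preceqE; apply/andP; split => /=; lia.

(* E_(a,b) with X3 and X0 abstracted (and locked, like [vpow]); [Emon_emon]
   substitutes qX3 and qX0 at the very end. *)
HB.lock Definition emon (A : unitRingType) (v X1 X2 X3 X0 : A) (a b : int) : A :=
  vpow v (- (a * b)) * X3 ^+ posp (- a) * X1 ^+ posp a * X2 ^+ posp b * X0 ^+ posp (- b).

Section StandardMonomials.
Variables (A : unitRingType) (v X1 X2 X0 X3 : A).
Hypothesis v_unit : v \is a GRing.unit.
Local Notation vp := (vpow v).
Local Notation E := (emon v X1 X2 X3 X0).

Lemma emonE (a b : int) : E a b =
  vp (- (a * b)) * (X3 ^+ posp (- a) * (X1 ^+ posp a * (X2 ^+ posp b * X0 ^+ posp (- b)))).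
Proof. by rewrite emon.unlock !mulrA. Qed.

Lemma emon_pp (n j : nat) : E n j = vp (- (n%:Z * j%:Z)) * (X1 ^+ n * X2 ^+ j).
Proof. by rewrite emonE !posp_oppn expr0 !mul1r mulr1. Qed.

Lemma emon_pn (n m : nat) : E n (- m%:Z) = vp (n%:Z * m%:Z) * (X1 ^+ n * X0 ^+ m).
Proof. by rewrite emonE opprK !posp_oppn !expr0 !mul1r mulrN opprK. Qed.

Lemma emon_np (k j : nat) : E (- k%:Z) j = vp (k%:Z * j%:Z) * (X3 ^+ k * X2 ^+ j).
Proof. by rewrite emonE opprK !posp_oppn !expr0 mul1r !mulr1 mulNr opprK. Qed.

Lemma emon_nn (k m : nat) :
  E (- k%:Z) (- m%:Z) = vp (- (k%:Z * m%:Z)) * (X3 ^+ k * X0 ^+ m).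
Proof. by rewrite emonE !opprK !posp_oppn !expr0 !mul1r mulrNN. Qed.

Lemma emon_p (n : nat) b :
  E n b = vp (- (n%:Z * b)) * (X1 ^+ n * (X2 ^+ posp b * X0 ^+ posp (- b))).
Proof. by rewrite emonE posp_oppn expr0 mul1r. Qed.

Lemma emon_n (k : nat) b :
  E (- k%:Z) b = vp (k%:Z * b) * (X3 ^+ k * (X2 ^+ posp b * X0 ^+ posp (- b))).
Proof. by rewrite emonE opprK posp_oppn expr0 mul1r mulNr opprK. Qed.

(* The Z-span of the v^e E_(a',b') with (a',b') ⪯ p and e <= n; the set
   Sigma_(c,d) of the paper contains Span (c, d) (-1). *)
Inductive Span (p : int * int) (n : int) : A -> Prop :=
  | Span0 : Span p n 0
  | SpanD x y : Span p n x -> Span p n y -> Span p n (x + y)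
  | SpanN x : Span p n x -> Span p n (- x)
  | Span_monomial a b e : preceq (a, b) p -> e <= n -> Span p n (vp e * E a b).

Lemma Span_mono p p' n n' x : Span p n x -> preceq p p' -> n <= n' -> Span p' n' x.
Proof.
move=> Sx pp' nn'; elim: Sx => [|{}x y _ Sx _ Sy|{}x _ Sx|a b e ab en].
- exact: Span0.
- exact: SpanD.
- exact: SpanN.
- by apply: Span_monomial; [exact: preceq_trans pp' | exact: le_trans nn'].
Qed.

Lemma Span_emon a b : Span (a, b) 0 (E a b).
Proof. by rewrite -[E a b]mul1r -(vpow0 v); apply: Span_monomial (preceq_refl _) _. Qed.

Lemma Span_vpow p n x (e : int) : Span p n x -> Span p (n + e) (vp e * x).
Proof.
elim=> [|{}x y _ Sx _ Sy|{}x _ Sx|a b e' ab en].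
- by rewrite mulr0; exact: Span0.
- by rewrite mulrDr; exact: SpanD.
- by rewrite mulrN; exact: SpanN.
- by rewrite vpowDA //; apply: Span_monomial ab _; rewrite addrC lerD2r.
Qed.

Lemma Span_mull (y : A) p p' m n x : GRing.comm v y ->
    (forall a b, preceq (a, b) p -> Span p' m (y * E a b)) ->
  Span p n x -> Span p' (m + n) (y * x).
Proof.
move=> vy yE; elim=> [|{}x z _ Sx _ Sz|{}x _ Sx|a b e ab en].
- by rewrite mulr0; exact: Span0.
- by rewrite mulrDr; exact: SpanD.
- by rewrite mulrN; exact: SpanN.
- rewrite vpow_mulCA //; apply: (Span_mono (Span_vpow e (yE a b ab)) (preceq_refl _)).
  by rewrite lerD2l.
Qed.

End StandardMonomials.

Section ExchangeRelations.
Variables (A : unitRingType) (v X1 X2 X0 X3 X4 : A).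
Local Notation vp := (vpow v).
Local Notation E := (emon v X1 X2 X3 X0).
Local Notation Span := (Span v X1 X2 X0 X3).
Local Notation Span_emon := (Span_emon v X1 X2 X0 X3).
Hypotheses (v_unit : v \is a GRing.unit) (vX1 : GRing.comm v X1) (vX2 : GRing.comm v X2)
  (vX0 : GRing.comm v X0) (vX3 : GRing.comm v X3) (vX4 : GRing.comm v X4).
Hypotheses (X2X1 : X2 * X1 = vp (-2) * (X1 * X2)) (X2X3 : X2 * X3 = vp 2 * (X3 * X2))
  (X0X1 : X0 * X1 = vp 2 * (X1 * X0)) (X2X0 : X2 * X0 = vp (-1) * X1 + 1)
  (X0X2 : X0 * X2 = vp 1 * X1 + 1) (X3X1 : X3 * X1 = vp (-4) * X2 ^+ 4 + 1)
  (X4X3 : X4 * X3 = vp (-2) * (X3 * X4)) (X4X2 : X4 * X2 = vp (-1) * X3 + 1)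
  (X4_X3X0 : X4 = vp (-1) * (X3 * X0) - vp (-4) * X2 ^+ 3)
  (X4X1 : X4 * X1 = vp (-3) * X2 ^+ 3 + vp 1 * X0).

Ltac comm_v := repeat first
  [ apply: commrM | apply: commrD | apply: commrN | apply: commrX | apply: commr1
  | exact: (commr_sym (comm_vpow _ (commr_refl v))) | assumption ].

Ltac vpow_congr := rewrite ?vpowDA //; congr (vp _ * _); ring.

Lemma X3X2 : X3 * X2 = vp (-2) * (X2 * X3).
Proof. by rewrite X2X3 vpowNK. Qed.

Lemma X2X1_pow (i j : nat) :
  X2 ^+ j * X1 ^+ i = vp (-2 * (i%:Z * j%:Z)) * (X1 ^+ i * X2 ^+ j).
Proof. exact: qcommX. Qed.

Lemma X2X3_pow (k j : nat) :
  X2 ^+ j * X3 ^+ k = vp (2 * (k%:Z * j%:Z)) * (X3 ^+ k * X2 ^+ j).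
Proof. exact: qcommX. Qed.

Lemma X3X2_pow (k j : nat) :
  X3 ^+ k * X2 ^+ j = vp (-2 * (k%:Z * j%:Z)) * (X2 ^+ j * X3 ^+ k).
Proof. rewrite (qcommX v_unit vX2 vX3 X3X2); congr (vp _ * _); lia. Qed.

Lemma X0X1_pow (i m : nat) :
  X0 ^+ m * X1 ^+ i = vp (2 * (i%:Z * m%:Z)) * (X1 ^+ i * X0 ^+ m).
Proof. exact: qcommX. Qed.

Lemma X4X3_pow (k : nat) : X4 * X3 ^+ k = vp (-2 * k%:Z) * (X3 ^+ k * X4).
Proof. exact: qcommXr. Qed.

Lemma X2_X1n (n : nat) w : X2 * (X1 ^+ n * w) = vp (-2 * n%:Z) * (X1 ^+ n * (X2 * w)).
Proof. by rewrite mulrA -{1}(expr1 X2) X2X1_pow expr1 -!mulrA; vpow_congr. Qed.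

Lemma X2_X3n (k : nat) w : X2 * (X3 ^+ k * w) = vp (2 * k%:Z) * (X3 ^+ k * (X2 * w)).
Proof. by rewrite mulrA -{1}(expr1 X2) X2X3_pow expr1 -!mulrA; vpow_congr. Qed.

Lemma X3n_X2n (k j : nat) w :
  X3 ^+ k * (X2 ^+ j * w) = vp (-2 * (k%:Z * j%:Z)) * (X2 ^+ j * (X3 ^+ k * w)).
Proof. by rewrite mulrA X3X2_pow -!mulrA. Qed.

Lemma X2_X0 w : X2 * (X0 * w) = vp (-1) * (X1 * w) + w.
Proof. by rewrite mulrA X2X0 mulrDl mul1r mulrA. Qed.

Lemma X3_X1 w : X3 * (X1 * w) = vp (-4) * (X2 ^+ 4 * w) + w.
Proof. by rewrite mulrA X3X1 mulrDl mul1r mulrA. Qed.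

Lemma X2_emon_pp (n j : nat) : X2 * E n j = vp (- n%:Z) * E n j.+1.
Proof.
rewrite !emon_pp vpow_mulCA; last by comm_v.
by rewrite X2_X1n -exprS; vpow_congr.
Qed.

Lemma X2_emon_pn (n m : nat) : X2 * E n (- (m.+1)%:Z) =
  vp (- n%:Z - m%:Z - 1) * E n.+1 (- m%:Z) + vp (- n%:Z) * E n (- m%:Z).
Proof.
rewrite !emon_pn vpow_mulCA; last by comm_v.
rewrite X2_X1n exprS X2_X0 mulrDr (vpow_mulCA (y := X1 ^+ n)); last by comm_v.
rewrite [X1 ^+ n * (X1 * _)]mulrA -exprSr !mulrDr !vpowDA //.
by congr (_ + _); vpow_congr.
Qed.

Lemma X2_emon_np (k j : nat) :
  X2 * E (- (k.+1)%:Z) j = vp (k.+1)%:Z * E (- (k.+1)%:Z) j.+1.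
Proof.
rewrite !emon_np vpow_mulCA; last by comm_v.
by rewrite X2_X3n -exprS; vpow_congr.
Qed.

Lemma X2_emon_nn (k m : nat) : X2 * E (- (k.+1)%:Z) (- (m.+1)%:Z) =
  vp (-7 * k%:Z - m%:Z - 4) * (X2 ^+ 4 * E (- k%:Z) (- m%:Z))
  + vp (k%:Z - m%:Z) * E (- k%:Z) (- m%:Z) + vp (k.+1)%:Z * E (- (k.+1)%:Z) (- m%:Z).
Proof.
rewrite !emon_nn vpow_mulCA; last by comm_v.
rewrite X2_X3n [X0 ^+ m.+1]exprS X2_X0 mulrDr (vpow_mulCA (y := X3 ^+ k.+1)); last by comm_v.
rewrite [X3 ^+ k.+1]exprSr -[_ * X3 * _]mulrA X3_X1 [X3 ^+ k * _]mulrDr.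
rewrite (vpow_mulCA (y := X3 ^+ k)); last by comm_v.
rewrite X3n_X2n (vpow_mulCA (y := X2 ^+ 4)); last by comm_v.
by rewrite !mulrDr !vpowDA //; congr (_ + _ + _); vpow_congr.
Qed.

(* The induction is on [-a]_+ because, for a, b < 0, X2 E_(a,b) involves
   X2^4 E_(a+1,b+1). *)
Definition X2_emon_bound (K : nat) := forall a b,
  (posp (- a) <= K)%N -> Span (a, b + 1) (posp (- a)) (X2 * E a b).

Lemma Span_X2_of K p n x : X2_emon_bound K -> Span p n x -> (posp (- p.1) <= K)%N ->
  Span (p.1, p.2 + 1) ((posp (- p.1))%:Z + n) (X2 * x).
Proof.
move=> HK Sx pK; apply: (Span_mull v_unit) Sx => // a b ab.
have /andP[aP _] := ab; have S_ab := HK a b (leq_trans aP pK).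
apply: (Span_mono S_ab); last by rewrite lez_nat.
by move: ab; rewrite preceqE /= => /andP[? ?]; solve_preceq.
Qed.

Lemma Span_X2n_of K (i : nat) p n x : X2_emon_bound K -> Span p n x ->
    (posp (- p.1) <= K)%N ->
  Span (p.1, p.2 + i%:Z) (i%:Z * (posp (- p.1))%:Z + n) (X2 ^+ i * x).
Proof.
move=> HK Sx pK; elim: i => [|i IH].
  by rewrite expr0 mul1r; apply: (Span_mono Sx); [solve_preceq | lia].
rewrite exprS -mulrA; apply: (Span_mono (Span_X2_of HK IH pK)); first by solve_preceq.
by rewrite /=; lia.
Qed.

Lemma Span_X2_emon_nat (n : nat) b : Span (n%:Z, b + 1) (posp (- n%:Z)) (X2 * E n b).
Proof.
rewrite posp_oppn; case: b => [j|m].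
  by rewrite X2_emon_pp; apply: Span_monomial; [solve_preceq | lia].
rewrite NegzE X2_emon_pn; apply: SpanD; apply: Span_monomial; try solve_preceq; lia.
Qed.

Lemma X2_emon_bound_all K : X2_emon_bound K.
Proof.
elim: K => [|K IH] [n|k] b //= kK; try exact: Span_X2_emon_nat.
rewrite NegzE; case: b => [j|m].
  by rewrite X2_emon_np; apply: Span_monomial; [solve_preceq | lia].
have kK' : (posp (- (- k%:Z, - m%:Z).1) <= K)%N by rewrite /= opprK.
have X24 := Span_vpow v_unit (-7 * k%:Z - m%:Z - 4) (Span_X2n_of 4 IH (Span_emon _ _) kK').
rewrite NegzE X2_emon_nn; apply: SpanD; first apply: SpanD.
- by apply: (Span_mono X24); [solve_preceq | rewrite /= opprK /=; lia].
- by apply: Span_monomial; [solve_preceq | lia].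
- by apply: Span_monomial; [solve_preceq | lia].
Qed.

Lemma Span_X2n (i : nat) (p : int * int) n x : Span p n x ->
  Span (p.1, p.2 + i%:Z) (i%:Z * (posp (- p.1))%:Z + n) (X2 ^+ i * x).
Proof. by move=> Sx; apply: Span_X2n_of (@X2_emon_bound_all (posp (- p.1))) Sx _. Qed.

Lemma emon_X0_nonpos a (m : nat) : vp a * E a (- m%:Z) * X0 = E a (- (m.+1)%:Z).
Proof.
by case: a => [n|k]; rewrite ?NegzE ?emon_pn ?emon_nn -!mulrA -exprSr; vpow_congr.
Qed.

Lemma X2S_X0 (j : nat) : X2 ^+ j.+1 * X0 = vp (-1 - 2 * j%:Z) * (X1 * X2 ^+ j) + X2 ^+ j.
Proof.
rewrite exprSr -mulrA X2X0 mulrDr mulr1 vpow_mulCA; last by comm_v.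
by rewrite -[X in X2 ^+ j * X]expr1 X2X1_pow expr1; congr (_ + _); vpow_congr.
Qed.

Lemma emon_X0_pp (n j : nat) :
  vp n%:Z * E n j.+1 * X0 = vp (-1 - j%:Z) * E n.+1 j + E n j.
Proof.
rewrite !emon_pp -!mulrA X2S_X0 mulrDr (vpow_mulCA (y := X1 ^+ n)); last by comm_v.
rewrite [X1 ^+ n * (X1 * _)]mulrA -exprSr !mulrDr !vpowDA //.
by congr (_ + _); vpow_congr.
Qed.

Lemma emon_X0_np (k j : nat) : vp (- (k.+1)%:Z) * E (- (k.+1)%:Z) j.+1 * X0 =
  vp (- j%:Z - 4 * k%:Z - 5) * E (- k%:Z) j.+4 + vp (- j%:Z - 1) * E (- k%:Z) j
  + E (- (k.+1)%:Z) j.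
Proof.
rewrite !emon_np -!mulrA X2S_X0 mulrDr (vpow_mulCA (y := X3 ^+ k.+1)); last by comm_v.
rewrite [X3 ^+ k.+1]exprSr -[_ * X3 * _]mulrA X3_X1 [X3 ^+ k * _]mulrDr.
rewrite (vpow_mulCA (y := X3 ^+ k)); last by comm_v.
rewrite -exprD !mulrDr !vpowDA //.
by congr (_ + _ + _); vpow_congr.
Qed.

Lemma Span_emon_X0 a b : Span (a + 1, b - 1) (-1) (vp a * E a b * X0 - E a (b - 1)).
Proof.
case: b => [[|j]|m]; rewrite ?NegzE.
- by rewrite -[Posz 0]/(- 0%N%:Z) emon_X0_nonpos subrr; exact: Span0.
- rewrite (_ : j.+1%:Z - 1 = j); last by lia.
  case: a => [n|k]; rewrite ?NegzE.
    by rewrite emon_X0_pp addrK; apply: Span_monomial; [solve_preceq | lia].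
  rewrite emon_X0_np addrK; apply: SpanD; apply: Span_monomial; try solve_preceq; lia.
- by rewrite (_ : - m.+1%:Z - 1 = - m.+2%:Z) ?emon_X0_nonpos ?subrr; [exact: Span0 | lia].
Qed.

Lemma X3_emon_nonpos (k : nat) b : vp b * X3 * E (- k%:Z) b = E (- (k.+1)%:Z) b.
Proof.
rewrite !emon_n -mulrA (vpow_mulCA (y := X3)) //.
by rewrite [X3 * (X3 ^+ k * _)]mulrA -exprS; vpow_congr.
Qed.

Lemma X3_emon_pos (n : nat) b : vp b * X3 * E n.+1 b = vp (-4) * (X2 ^+ 4 * E n b) + E n b.
Proof.
rewrite !emon_p -mulrA (vpow_mulCA (y := X3)) // exprS -mulrA X3_X1.
rewrite (vpow_mulCA (y := X2 ^+ 4)); last by comm_v.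
by rewrite !mulrDr !vpowDA //; congr (_ + _); vpow_congr.
Qed.

Lemma Span_X3_emon a b : Span (a - 1, b + 4) (-1) (vp b * X3 * E a b - E (a - 1) b).
Proof.
case: a => [[|n]|k]; rewrite ?NegzE.
- by rewrite -[Posz 0]/(- 0%N%:Z) X3_emon_nonpos subrr; exact: Span0.
- rewrite X3_emon_pos (_ : n.+1%:Z - 1 = n) ?addrK; last by lia.
  apply: (Span_mono (Span_vpow v_unit (-4) (Span_X2n 4 (Span_emon n b)))); first by solve_preceq.
  by rewrite /= posp_oppn; lia.
- by rewrite (_ : - k.+1%:Z - 1 = - k.+2%:Z) ?X3_emon_nonpos ?subrr; [exact: Span0 | lia].
Qed.

Lemma X2X0n_X1 b : X2 ^+ posp b * (X0 ^+ posp (- b) * X1) =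
  vp (-2 * b) * (X1 * (X2 ^+ posp b * X0 ^+ posp (- b))).
Proof.
rewrite mulrA; case: b => [j|m]; rewrite ?NegzE ?opprK ?posp_oppn /= expr0 ?mulr1 ?mul1r.
  by rewrite -[X in _ * X = _]expr1 X2X1_pow expr1; vpow_congr.
by rewrite -[X in _ * X = _]expr1 X0X1_pow expr1; vpow_congr.
Qed.

Lemma emon_X1_pos (n : nat) b : vp b * E n b * X1 = E n.+1 b.
Proof.
rewrite !emon_p -!mulrA X2X0n_X1 (vpow_mulCA (y := X1 ^+ n)); last by comm_v.
by rewrite [X1 ^+ n * (X1 * _)]mulrA -exprSr; vpow_congr.
Qed.

Lemma emon_X1_neg (k : nat) b : vp b * E (- (k.+1)%:Z) b * X1 =
  vp (-4 - 8 * k%:Z) * (X2 ^+ 4 * E (- k%:Z) b) + E (- k%:Z) b.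
Proof.
(* A plain [-!mulrA] would also unfold [X2 ^+ 4] on the right-hand side. *)
rewrite [E _ b]emon_n -!(mulrA _ _ X1) X2X0n_X1 (vpow_mulCA (y := X3 ^+ k.+1)); last by comm_v.
rewrite exprSr -mulrA X3_X1 mulrDr (vpow_mulCA (y := X3 ^+ k)); last by comm_v.
rewrite X3n_X2n emon_n (vpow_mulCA (y := X2 ^+ 4)); last by comm_v.
by rewrite !mulrDr !vpowDA //; congr (_ + _); vpow_congr.
Qed.

Lemma Span_emon_X1 a b : Span (a + 1, b + 4) (-1) (vp b * E a b * X1 - E (a + 1) b).
Proof.
case: a => [n|k]; rewrite ?NegzE.
  by rewrite emon_X1_pos (_ : n%:Z + 1 = n.+1) ?subrr; [exact: Span0 | lia].
rewrite emon_X1_neg (_ : - k.+1%:Z + 1 = - k%:Z) ?addrK; last by lia.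
apply: (Span_mono (Span_vpow v_unit (-4 - 8 * k%:Z) (Span_X2n 4 (Span_emon (- k%:Z) b)))).
  by solve_preceq.
by rewrite /= opprK /=; lia.
Qed.

Lemma X2n_X1n (i n : nat) w :
  X2 ^+ i * (X1 ^+ n * w) = vp (-2 * (n%:Z * i%:Z)) * (X1 ^+ n * (X2 ^+ i * w)).
Proof. by rewrite mulrA X2X1_pow -!mulrA. Qed.

Lemma X0_X1n (n : nat) w : X0 * (X1 ^+ n * w) = vp (2 * n%:Z) * (X1 ^+ n * (X0 * w)).
Proof. by rewrite mulrA -{1}(expr1 X0) X0X1_pow expr1 -!mulrA; vpow_congr. Qed.

Lemma X0_X2S (j : nat) : X0 * X2 ^+ j.+1 = vp 1 * (X1 * X2 ^+ j) + X2 ^+ j.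
Proof. by rewrite exprS mulrA X0X2 mulrDl mul1r -mulrA. Qed.

Lemma X4_X2S (j : nat) : X4 * X2 ^+ j.+1 = vp (-1) * (X3 * X2 ^+ j) + X2 ^+ j.
Proof. by rewrite exprS mulrA X4X2 mulrDl mul1r -mulrA. Qed.

Lemma X4_X3n (k : nat) w : X4 * (X3 ^+ k * w) = vp (-2 * k%:Z) * (X3 ^+ k * (X4 * w)).
Proof. by rewrite mulrA X4X3_pow -!mulrA. Qed.

Lemma X4_emon_pp (n j : nat) : vp (- n.+1%:Z) * X4 * E n.+1 j.+1 =
  vp (-4 * n%:Z - j%:Z - 5) * E n j.+4 + (E n.+1 j + vp (- j%:Z - 1) * E n j).
Proof.
rewrite [E _ _]emon_pp -mulrA (vpow_mulCA (y := X4)) // [X1 ^+ n.+1]exprS.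
rewrite -[X1 * X1 ^+ n * _]mulrA [X4 * (X1 * _)]mulrA X4X1 mulrDl -!(mulrA (vp _)).
rewrite X2n_X1n -exprD X0_X1n X0_X2S [X1 ^+ n * (_ + _)]mulrDr.
rewrite (vpow_mulCA (y := X1 ^+ n)); last by comm_v.
rewrite [X1 ^+ n * (X1 * _)]mulrA -exprSr !emon_pp !mulrDr !vpowDA //.
by congr (_ + (_ + _)); vpow_congr.
Qed.

Lemma X4_emon_np (k j : nat) : vp k%:Z * X4 * E (- k%:Z) j.+1 =
  vp (- j%:Z - 1) * E (- k.+1%:Z) j + E (- k%:Z) j.
Proof.
rewrite !emon_np -mulrA (vpow_mulCA (y := X4)) // X4_X3n X4_X2S [X3 ^+ k * (_ + _)]mulrDr.
rewrite (vpow_mulCA (y := X3 ^+ k)); last by comm_v.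
rewrite [X3 ^+ k * (X3 * _)]mulrA -exprSr !mulrDr !vpowDA //.
by congr (_ + _); vpow_congr.
Qed.

Lemma Span_X4_emon_bpos a b : 0 < b ->
  Span (a - 1, b - 1) (-1) (vp (- a) * X4 * E a b - E a (b - 1)).
Proof.
case: b => [[|j]|m] // _; rewrite (_ : j.+1%:Z - 1 = j); last by lia.
case: a => [[|n]|k]; rewrite ?NegzE ?opprK.
- rewrite -[Posz 0]/(- 0%N%:Z) X4_emon_np addrK.
  by apply: Span_monomial; [solve_preceq | lia].
- rewrite X4_emon_pp (addrC (E _ _)) addrA addrK.
  by apply: SpanD; apply: Span_monomial; try solve_preceq; lia.
- rewrite X4_emon_np addrK.
  by apply: Span_monomial; [solve_preceq | lia].
Qed.

Lemma X4_emon_pn (n m : nat) : vp (- (n.+1%:Z - - m%:Z)) * X4 * E n.+1 (- m%:Z) =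
  vp (- n%:Z - 4) * (X2 ^+ 3 * E n (- m%:Z)) + E n (- m.+1%:Z).
Proof.
rewrite [E _ _]emon_pn -mulrA (vpow_mulCA (y := X4)) // [X1 ^+ n.+1]exprS.
rewrite -[X1 * X1 ^+ n * _]mulrA [X4 * (X1 * _)]mulrA X4X1 mulrDl -!(mulrA (vp _)).
rewrite X0_X1n -exprS !emon_pn (vpow_mulCA (y := X2 ^+ 3)); last by comm_v.
by rewrite !mulrDr !vpowDA //; congr (_ + _); vpow_congr.
Qed.

Lemma Span_X4_emon_apos a b : 0 < a -> b <= 0 ->
  Span (a - 1, b + 3) (-1) (vp (- (a - b)) * X4 * E a b - E (a - 1) (b - 1)).
Proof.
case: a => [[|n]|k] // _ /int_nonposP[m ->].
rewrite X4_emon_pn (_ : - m%:Z - 1 = - m.+1%:Z); last by lia.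
rewrite (_ : n.+1%:Z - 1 = n) ?addrK; last by lia.
apply: (Span_mono (Span_vpow v_unit (- n%:Z - 4) (Span_X2n 3 (Span_emon n (- m%:Z))))).
  by solve_preceq.
by rewrite /= posp_oppn; lia.
Qed.

Lemma X4_emon_nn (k m : nat) : vp (- (- k%:Z - - m%:Z)) * X4 * E (- k%:Z) (- m%:Z) =
  E (- k.+1%:Z) (- m.+1%:Z) - vp (-7 * k%:Z - m%:Z - 4) * (X2 ^+ 3 * E (- k%:Z) (- m%:Z)).
Proof.
rewrite [E _ _]emon_nn -mulrA (vpow_mulCA (y := X4)) // X4_X3n X4_X3X0 mulrBl.
rewrite -!(mulrA (vp _)) -[X3 * X0 * _]mulrA -exprS mulrBr.
rewrite !(vpow_mulCA (y := X3 ^+ k)); try by comm_v.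
rewrite [X3 ^+ k * (X3 * _)]mulrA -exprSr X3n_X2n !emon_nn.
rewrite (vpow_mulCA (y := X2 ^+ 3)); last by comm_v.
by rewrite !mulrBr !vpowDA //; congr (_ - _); vpow_congr.
Qed.

Lemma Span_X4_emon_nonpos a b : a <= 0 -> b <= 0 ->
  Span (a, b) (-1) (vp (- (a - b)) * X4 * E a b - E (a - 1) (b - 1)).
Proof.
move=> /int_nonposP[k ->] /int_nonposP[m ->].
rewrite X4_emon_nn (_ : - k%:Z - 1 = - k.+1%:Z); last by lia.
rewrite (_ : - m%:Z - 1 = - m.+1%:Z); last by lia.
rewrite addrAC subrr add0r; apply: SpanN.
apply: (Span_mono (Span_vpow v_unit (-7 * k%:Z - m%:Z - 4) (Span_X2n 3 (Span_emon _ _)))).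
  by solve_preceq.
by rewrite /= opprK /=; lia.
Qed.

Lemma Span_emon_products a b :
  Span (a + 1, b - 1) (-1) (vp a * E a b * X0 - E a (b - 1)) /\
  Span (a - 1, b + 4) (-1) (vp b * X3 * E a b - E (a - 1) b) /\
  Span (a + 1, b + 4) (-1) (vp b * E a b * X1 - E (a + 1) b) /\
  (0 < b -> Span (a - 1, b - 1) (-1) (vp (- a) * X4 * E a b - E a (b - 1))) /\
  (0 < a -> b <= 0 ->
    Span (a - 1, b + 3) (-1) (vp (- (a - b)) * X4 * E a b - E (a - 1) (b - 1))) /\
  (a <= 0 -> b <= 0 ->
    Span (a, b) (-1) (vp (- (a - b)) * X4 * E a b - E (a - 1) (b - 1))).
Proof.
split; first exact: Span_emon_X0.
split; first exact: Span_X3_emon.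
split; first exact: Span_emon_X1.
split; first exact: Span_X4_emon_bpos.
by split; [exact: Span_X4_emon_apos | exact: Span_X4_emon_nonpos].
Qed.

End ExchangeRelations.

Section QuantumTorus.
Variables (A : unitRingType) (v X1 X2 : A).
Hypotheses (v_unit : v \is a GRing.unit) (X1_unit : X1 \is a GRing.unit)
  (X2_unit : X2 \is a GRing.unit) (vX1 : GRing.comm v X1) (vX2 : GRing.comm v X2)
  (X1X2 : X1 * X2 = v ^+ 2 * (X2 * X1)).

Local Notation vp := (vpow v).
Local Notation X0 := (qX0 v X1 X2).
Local Notation X3 := (qX3 v X1 X2).
Local Notation X4 := (qX4 v X1 X2).

Ltac comm_v := unfold qX4, qX3, qX0; repeat first
  [ apply: commrM | apply: commrD | apply: commrN | apply: commr1 | apply: commr0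
  | exact: commr_refl | exact: commr_int | exact: (commr_sym (comm_vpow _ (commr_refl v)))
  | apply: commrX | apply: commrV | assumption ].

Lemma comm_vX0 : GRing.comm v X0. Proof. by comm_v. Qed.
Lemma comm_vX3 : GRing.comm v X3. Proof. by comm_v. Qed.
Lemma comm_vX4 : GRing.comm v X4. Proof. by comm_v. Qed.

Lemma X2X1 : X2 * X1 = vp (-2) * (X1 * X2).
Proof. by rewrite X1X2 -(vpow_nat v 2) vpowNK. Qed.

Lemma X2X3 : X2 * X3 = vp 2 * (X3 * X2).
Proof.
have cP : GRing.comm X2 (v ^+ 4 * X2 ^+ 4 + 1).
  by apply/commrD/commr1/commrM; [exact/commrX/commr_sym | exact/commrX/commr_refl].
rewrite /qX3 mulrA (qcommVr v_unit vX1 X1_unit X2X1) opprK.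
by rewrite -mulrA -[X1^-1 * X2 * _]mulrA cP !mulrA.
Qed.

Lemma X0X1 : X0 * X1 = vp 2 * (X1 * X0).
Proof.
have cQ : GRing.comm X1 (v * X1 + 1) by apply/commrD/commr1/commrM/commr_refl/commr_sym.
rewrite /qX0 -mulrA (qcommVl v_unit vX2 X2_unit X2X1) opprK vpow_mulCA; last by comm_v.
by congr (_ * _); rewrite mulrA -cQ mulrA.
Qed.

Lemma X2X0 : X2 * X0 = vp (-1) * X1 + 1.
Proof.
rewrite /qX0 mulrA mulrDr mulr1 mulrDl mulrV // [X2 * (v * X1)]mulrA -vX2.
by rewrite -[v * X2 * X1]mulrA X2X1 -{1}(vpow1 v) vpowDA // -mulrA mulrK.
Qed.

Lemma X0X2 : X0 * X2 = vp 1 * X1 + 1.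
Proof. by rewrite /qX0 mulrVK // vpow1. Qed.

Lemma X3X1 : X3 * X1 = vp (-4) * X2 ^+ 4 + 1.
Proof.
rewrite /qX3 -mulrA mulrDl mul1r -mulrA -[X in X2 ^+ 4 * X]expr1.
rewrite (qcommX v_unit vX1 vX2 X2X1 1 4) expr1 -(vpow_nat v 4) vpowDA // mulrDr.
rewrite vpow_mulCA; last by comm_v.
by rewrite mulKr // mulVr.
Qed.

Lemma X4X3 : X4 * X3 = vp (-2) * (X3 * X4).
Proof.
have cP : GRing.comm X3 (v * X3 + 1).
  by apply/commrD/commr1/commrM/commr_refl/commr_sym; exact: comm_vX3.
rewrite /qX4 -mulrA -cP mulrA (qcommVl v_unit vX2 X2_unit X2X3).
by rewrite -mulrA -[X3 * X2^-1 * _]mulrA.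
Qed.

Lemma X4X2 : X4 * X2 = vp (-1) * X3 + 1.
Proof.
have X3X2 : X3 * X2 = vp (-2) * (X2 * X3) by rewrite X2X3 vpowNK.
rewrite /qX4 -mulrA mulrDl mul1r -mulrA X3X2 mulrDr mulVr // -{1}(vpow1 v) vpowDA //.
rewrite vpow_mulCA; last by comm_v.
by rewrite mulKr.
Qed.

Lemma X4_X3X0 : X4 = vp (-1) * (X3 * X0) - vp (-4) * X2 ^+ 3.
Proof.
apply: (mulIr X2_unit); rewrite X4X2 mulrBl -[vp (-1) * _ * X2]mulrA -[X3 * X0 * X2]mulrA.
rewrite X0X2 -[vp (-4) * _ * X2]mulrA -exprSr [X3 * (_ + 1)]mulrDr mulr1.
rewrite (vpow_mulCA _ _ comm_vX3) X3X1 !mulrDr !vpowDA // mulr1 vpow0.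
by rewrite addrAC [_ + 1 + _]addrAC subrr add0r addrC.
Qed.

Lemma X4X1 : X4 * X1 = vp (-3) * X2 ^+ 3 + vp 1 * X0.
Proof.
apply: (mulIr X2_unit); rewrite -mulrA X1X2 -(vpow_nat v 2) vpow_mulCA; last exact: comm_vX4.
rewrite [X4 * (X2 * X1)]mulrA X4X2 mulrDl mul1r -[vp (-1) * X3 * X1]mulrA X3X1.
rewrite !mulrDr mulr1 !vpowDA // mulrDl -[vp (-3) * X2 ^+ 3 * X2]mulrA -exprSr.
rewrite -[vp 1 * X0 * X2]mulrA X0X2 mulrDr mulr1 vpowDA // vpowD //.
by rewrite -addrA [vp (1 + 1) * X1 + _]addrC.
Qed.
End QuantumTorus.

Section SigmaClosure.
Variables (A : unitRingType) (v X1 X2 : A).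
Local Notation Sigma := (Sigma v X1 X2).
Local Notation Emon := (Emon v X1 X2).

Lemma Emon_emon a b : emon v X1 X2 (qX3 v X1 X2) (qX0 v X1 X2) a b = Emon a b.
Proof. by rewrite emon.unlock vpowE. Qed.

Lemma coefOK_vpow (e : int) : e <= -1 -> coefOK v (vpow v e).
Proof.
case: e => [//|k] _; exists k.+1, (fun i => (i == k)%:Z).
rewrite big_ord_recr /= eqxx big1 ?add0r ?mul1r ?vpowE // => i _.
by rewrite /= ltn_eqF // mul0r.
Qed.

Lemma coefOKN f : coefOK v f -> coefOK v (- f).
Proof.
move=> [n [c ->]]; exists n, (fun i => - c i).
by rewrite -sumrN; apply: eq_bigr => i _; rewrite mulrNz mulNr.
Qed.

Lemma Sigma0 c d : Sigma c d 0.
Proof. by exists [::]; rewrite big_nil. Qed.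

Lemma SigmaD c d x y : Sigma c d x -> Sigma c d y -> Sigma c d (x + y).
Proof.
move=> [s [sP ->]] [s' [s'P ->]]; exists (s ++ s'); rewrite big_cat; split=> // t.
by rewrite mem_cat => /orP[/sP | /s'P].
Qed.

Lemma SigmaN c d x : Sigma c d x -> Sigma c d (- x).
Proof.
move=> [s [sP ->]]; exists [seq (t.1, - t.2) | t <- s]; split.
  by move=> _ /mapP[t /sP[tP fP] ->]; split; last exact: coefOKN.
by rewrite big_map -sumrN; apply: eq_bigr => t _; rewrite mulNr.
Qed.

Lemma Sigma_monomial c d a b f :
  preceq (a, b) (c, d) -> coefOK v f -> Sigma c d (f * Emon a b).
Proof.
by move=> ab fP; exists [:: ((a, b), f)]; rewrite big_seq1; split=> // t /[!inE] /eqP->.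
Qed.

Lemma Span_Sigma c d x :
  Span v X1 X2 (qX0 v X1 X2) (qX3 v X1 X2) (c, d) (-1) x -> Sigma c d x.
Proof.
elim=> [|{}x y _ Sx _ Sy|{}x _ Sx|a b e ab e_neg].
- exact: Sigma0.
- exact: SigmaD.
- exact: SigmaN.
- by rewrite Emon_emon; apply: Sigma_monomial ab (coefOK_vpow e_neg).
Qed.

End SigmaClosure.

Theorem lemma4p3 (A : unitRingType) (v X1 X2 : A)
  (hv : v \is a GRing.unit) (h1 : X1 \is a GRing.unit) (h2 : X2 \is a GRing.unit)
  (hv1 : GRing.comm v X1) (hv2 : GRing.comm v X2)
  (h12 : X1 * X2 = v ^+ 2 * (X2 * X1))
  (a b : int) :
  Sigma v X1 X2 (a + 1) (b - 1)
    (v ^ a * Emon v X1 X2 a b * qX0 v X1 X2 - Emon v X1 X2 a (b - 1)) /\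
  Sigma v X1 X2 (a - 1) (b + 4)
    (v ^ b * qX3 v X1 X2 * Emon v X1 X2 a b - Emon v X1 X2 (a - 1) b) /\
  Sigma v X1 X2 (a + 1) (b + 4)
    (v ^ b * Emon v X1 X2 a b * X1 - Emon v X1 X2 (a + 1) b) /\
  (0 < b ->
    Sigma v X1 X2 (a - 1) (b - 1)
      (v ^ (- a) * qX4 v X1 X2 * Emon v X1 X2 a b - Emon v X1 X2 a (b - 1))) /\
  (0 < a -> b <= 0 ->
    Sigma v X1 X2 (a - 1) (b + 3)
      (v ^ (- (a - b)) * qX4 v X1 X2 * Emon v X1 X2 a b
         - Emon v X1 X2 (a - 1) (b - 1))) /\
  (a <= 0 -> b <= 0 ->
    Sigma v X1 X2 a b
      (v ^ (- (a - b)) * qX4 v X1 X2 * Emon v X1 X2 a b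
         - Emon v X1 X2 (a - 1) (b - 1))).
Proof.
have [S1 [S2 [S3 [S4 [S5 S6]]]]] := Span_emon_products hv hv1 hv2
  (comm_vX0 hv1 hv2) (comm_vX3 hv1 hv2) (comm_vX4 hv1 hv2) (X2X1 hv h12)
  (X2X3 hv h1 hv1 hv2 h12) (X0X1 hv h2 hv1 hv2 h12) (X2X0 hv h2 hv2 h12) (X0X2 v X1 h2)
  (X3X1 hv h1 hv1 hv2 h12) (X4X3 hv h1 h2 hv1 hv2 h12) (X4X2 hv h1 h2 hv1 hv2 h12)
  (X4_X3X0 hv h1 h2 hv1 hv2 h12) (X4X1 hv h1 h2 hv1 hv2 h12) a b.
rewrite -!Emon_emon -!vpowE.
split; first exact: Span_Sigma S1.
split; first exact: Span_Sigma S2.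
split; first exact: Span_Sigma S3.
split; first by move=> /S4 /Span_Sigma.
by split=> [a_pos b_nonpos | a_nonpos b_nonpos]; apply: Span_Sigma; [exact: S5 | exact: S6].
Qed.
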